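(* Let $k$ be a difference field of characteristic $0$, $R=k\{y_1,\ldots,y_n\}$, and $I$ a monomial $\sigma$-ideal of $R$ with support set $S=\{\mathbf{u}\in\mathbb{N}[x]^n:\mathbf{y}^{\mathbf{u}}\in I\}$. Then $I$ is radical and well-mixed if and only if: (a) for all $m\in\mathbb{N}\setminus\{0\}$ and $\mathbf{u}\in\mathbb{N}[x]^n$, $m\mathbf{u}\in S$ implies $\mathbf{u}\in S$; and (b) for all $\mathbf{u},\mathbf{v}\in\mathbb{N}[x]^n$, $\mathbf{u}+\mathbf{v}\in S$ implies $\mathbf{u}+x\mathbf{v}\in S$.
   Context: A difference field is a field $k$ with a ring endomorphism $\sigma$; $R=k\{y_1,\ldots,y_n\}$ is the polynomial ring over $k$ in the variables $\sigma^j(y_i)$, with $\sigma$ extended naturally. For $p=\sum_ic_ix^i\in\mathbb{N}[x]$ and $a\in R$, $a^p=\prod_i(\sigma^i(a))^{c_i}$; $\mathbf{y}^{\mathbf{u}}=y_1^{u_1}\cdots y_n^{u_n}$. A $\sigma$-ideal is an ideal stable under $\sigma$; monomial if generated by monomials; well-mixed if $ab\in I\Rightarrow a\sigma(b)\in I$; radical means radical as an ideal. *)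

From HB Require Import structures.
From mathcomp Require Import all_boot all_order all_algebra.
From mathcomp Require Import finmap.
From mathcomp.multinomials Require Import monalg.
Set Implicit Arguments.
Unset Strict Implicit.
Unset Printing Implicit Defensive.
Import GRing.Theory.
Local Open Scope ring_scope.

(* The difference polynomial ring R = k{y_1,...,y_n}: the polynomial ring over k
   in the variables sigma^j(y_i), i < n, j in N.  The variable sigma^j(y_i) is
   indexed by the pair (i, j). *)
Definition dvar (n : nat) := ('I_n * nat)%type.
Definition dpoly (k : fieldType) (n : nat) := {malg k[cmonom (dvar n)]}.

Definition dX (k : fieldType) (n : nat) (v : dvar n) : dpoly k n :=
  << ucm v >>.

(* the natural extension of sigma : k -> k to R: coefficients are mapped by
   sigma and each variable sigma^j(y_i) is sent to sigma^(j+1)(y_i). *)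
Definition dsigma (k : fieldType) (sigma : {rmorphism k -> k}) (n : nat)
    (g : dpoly k n) : dpoly k n :=
  \sum_(m <- msupp g)
     (sigma (g@_m))%:MP *
     \prod_(v <- finsupp (m : {fsfun of _ : dvar n => 0%N}))
        dX k (v.1, v.2.+1) ^+ (m v).

(* a^p = prod_i (sigma^i a)^(c_i) for p = sum_i c_i x^i in N[x] *)
Definition dpow (k : fieldType) (sigma : {rmorphism k -> k}) (n : nat)
    (a : dpoly k n) (p : {poly nat}) : dpoly k n :=
  \prod_(i < size p) (iter i (@dsigma k sigma n) a) ^+ (p`_i)%R.

Definition ymon (k : fieldType) (sigma : {rmorphism k -> k}) (n : nat)
    (u : 'I_n -> {poly nat}) : dpoly k n :=
  \prod_(i < n) @dpow k sigma n (dX k (i, 0%N)) (u i).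

Definition is_ideal (R : comRingType) (I : R -> Prop) : Prop :=
  [/\ I 0,
      (forall a b, I a -> I b -> I (a + b)) &
      (forall r a, I a -> I (r * a))].

Definition ideal_gen (R : comRingType) (G : R -> Prop) (a : R) : Prop :=
  exists s : seq (R * R),
    (forall p, p \in s -> G p.2) /\ a = \sum_(p <- s) p.1 * p.2.

Definition sigma_ideal (k : fieldType) (sigma : {rmorphism k -> k}) (n : nat)
    (I : dpoly k n -> Prop) : Prop :=
  is_ideal I /\ (forall a, I a -> I (dsigma sigma a)).

Definition monomial_ideal (k : fieldType) (sigma : {rmorphism k -> k}) (n : nat)
    (I : dpoly k n -> Prop) : Prop :=
  exists U : ('I_n -> {poly nat}) -> Prop,
    forall a, I a <-> ideal_gen (fun b => exists2 u, U u & b = ymon sigma u) a.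

Definition well_mixed (k : fieldType) (sigma : {rmorphism k -> k}) (n : nat)
    (I : dpoly k n -> Prop) : Prop :=
  forall a b, I (a * b) -> I (a * dsigma sigma b).

Definition radical_ideal (R : comRingType) (I : R -> Prop) : Prop :=
  forall (a : R) (m : nat), (0 < m)%N -> I (a ^+ m) -> I a.

(* A monomial ideal is determined by the monomials it contains, and a
   polynomial f lies outside it exactly when some monomial t of f does.  The
   key tool is, for a finite set V of variables, the ring morphism that kills
   every variable outside V; it lands in a polynomial ring in finitely many
   variables, an integral domain.  When condition (a) holds and t is not in I,
   no monomial of I uses only variables of V = supp t, so this morphism kills I
   but not f; since its target is a domain, it cannot kill a power of f, which
   gives radicality.  For well-mixedness with ab in I and t a monomial of
   a sigma(b) outside I, one enlarges V, one variable at a time, keeping this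
   property together with the non-vanishing of the images of a and sigma(b):
   the image of b must vanish, so some monomial s of b with sigma(s) supported
   in V has a variable y outside V while sigma(y) lies in V, and by (a) and (b)
   the set V + {y} is again avoided by I.  Since y always comes from the finitely
   many variables of b, this is absurd. *)
From HB Require Import structures.
From mathcomp Require Import all_boot all_order all_algebra.
From mathcomp Require Import finmap.
From mathcomp.multinomials Require Import monalg.
From mathcomp.multinomials Require Import mpoly.
Import monalg.
From Stdlib Require Import Classical.
Set Implicit Arguments.
Unset Strict Implicit.
Unset Printing Implicit Defensive.
Import GRing.Theory.
Local Open Scope ring_scope.

Section Cmonom.
Variable T : choiceType.
Implicit Types (m r t : cmonom T).

Definition expcm t (e : nat) : cmonom T := \big[mmul/mone]_(i < e) t.

Lemma cm_big (J : Type) (s : seq J) (P : pred J) (F : J -> cmonom T) v :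
  (\big[mmul/mone]_(x <- s | P x) F x) v = (\sum_(x <- s | P x) F x v)%N.
Proof. exact: (big_morph (fun m => m v) (fun a b => cmM v a b) (cm1 v)). Qed.

Lemma expcmE t e v : expcm t e v = (e * t v)%N.
Proof. by rewrite /expcm cm_big sum_nat_const card_ord. Qed.

Lemma cm_notin_finsupp m v : v \notin finsupp m -> m v = 0%N.
Proof. by rewrite -cmE_eq0 => /eqP. Qed.

Lemma cm_le_mdeg m v : (m v <= mdeg m)%N.
Proof.
have [vm|vm] := boolP (v \in finsupp m); last by rewrite cm_notin_finsupp.
by rewrite mdegE (bigD1_seq v) ?fset_uniq //= leq_addr.
Qed.

Variable K : nzRingType.

Lemma malgUM m1 m2 : << mmul m1 m2 >> = << m1 >> * << m2 >> :> {malg K[cmonom T]}.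
Proof. by rewrite malgM_def fgmulUU mulr1. Qed.

Lemma malgU_big (J : Type) (s : seq J) (P : pred J) (F : J -> cmonom T) :
  << \big[mmul/mone]_(x <- s | P x) F x >> =
  \prod_(x <- s | P x) << F x >> :> {malg K[cmonom T]}.
Proof. exact: (big_morph _ malgUM (erefl _)). Qed.

Lemma malgU_expcm t e : << expcm t e >> = << t >> ^+ e :> {malg K[cmonom T]}.
Proof. by rewrite /expcm malgU_big prodr_const card_ord. Qed.

Lemma malgUZ (c : K) m : << c *g m >> = c%:MP * << m >>.
Proof. by rewrite malgM_def fgmulUU mulr1 mul1m. Qed.

Lemma msupp_sum_malgU (s : seq (cmonom T)) (c : cmonom T -> K)
    (F : cmonom T -> cmonom T) m :
  m \in msupp (\sum_(x <- s) << c x *g F x >>) -> exists2 x, x \in s & m = F x.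
Proof.
elim: s => [|x s IH]; first by rewrite big_nil msupp0.
rewrite big_cons => /(fsubsetP (msuppD_le _ _)); rewrite in_fsetU => /orP[|].
  by move/(fsubsetP msuppU_le); rewrite in_fset1 => /eqP ->; exists x; rewrite ?mem_head.
by case/IH => y ys ->; exists y; rewrite // inE ys orbT.
Qed.

Definition malg_vars (f : {malg K[cmonom T]}) : {fset T} :=
  (\bigcup_(m <- msupp f) finsupp m)%fset.

Lemma finsupp_malg_vars f m : m \in msupp f -> (finsupp m `<=` malg_vars f)%fset.
Proof. by move=> mf; apply: bigfcup_sup. Qed.

End Cmonom.

Section Ideal.
Variables (R : comNzRingType) (I : R -> Prop).
Hypothesis idealI : is_ideal I.

Lemma ideal0 : I 0. Proof. by case: idealI. Qed.

Lemma idealD a b : I a -> I b -> I (a + b).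
Proof. by case: idealI => _ + _; apply. Qed.

Lemma idealMl r a : I a -> I (r * a).
Proof. by case: idealI => _ _; apply. Qed.

Lemma ideal_sum (J : eqType) (s : seq J) (F : J -> R) :
  (forall x, x \in s -> I (F x)) -> I (\sum_(x <- s) F x).
Proof.
elim: s => [|x s IH] Is; first by rewrite big_nil; apply: ideal0.
rewrite big_cons; apply: idealD; first exact/Is/mem_head.
by apply: IH => y ys; apply: Is; rewrite inE ys orbT.
Qed.

End Ideal.

Section Restriction.
Variables (T : choiceType) (K : comNzRingType) (V : {fset T}).
Local Notation N := (size (enum_fset V)).
Local Notation vars := (in_tuple (enum_fset V)).
Local Notation P := (mpoly.mpoly N K).
Implicit Types (m : cmonom T) (f : {malg K[cmonom T]}).

Definition restr_mnm m : mpoly.multinom N :=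
  mpoly.Multinom [tuple m (tnth vars i) | i < N].

Lemma restr_mnmE m i : mpoly.fun_of_multinom (restr_mnm m) i = m (tnth vars i).
Proof. by rewrite mpoly.multinomE tnth_mktuple. Qed.

Lemma restr_mnm_inj m1 m2 :
  (finsupp m1 `<=` V)%fset -> (finsupp m2 `<=` V)%fset ->
  restr_mnm m1 = restr_mnm m2 -> m1 = m2.
Proof.
move=> m1V m2V eq12; apply/eqP/cmP => v.
have [vV|vV] := boolP (v \in V).
  have /tnthP[i ->] : v \in vars by [].
  by rewrite -!restr_mnmE eq12.
rewrite !cm_notin_finsupp //; apply: contra vV; [exact: (fsubsetP m2V) | exact: (fsubsetP m1V)].
Qed.

Definition restr_cm m : P :=
  if (finsupp m `<=` V)%fset then mpoly.mpolyX K (restr_mnm m) else 0.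

Lemma restr_cm_mmorphism : mmorphism restr_cm.
Proof.
split.
  move=> m1 m2; rewrite /restr_cm mdomD fsubUset.
  case: (finsupp m1 `<=` V)%fset; case: (finsupp m2 `<=` V)%fset;
    rewrite ?mul0r ?mulr0 // -mpoly.mpolyXD.
  by congr mpoly.mpolyX; apply/mpoly.mnmP => i; rewrite mpoly.mnmDE !restr_mnmE cmM.
rewrite /restr_cm mdom1 fsub0set -(mpoly.mpolyX0 N K); congr mpoly.mpolyX.
by apply/mpoly.mnmP => i; rewrite restr_mnmE cm1 mpoly.mnm0E.
Qed.

HB.instance Definition _ :=
  isMultiplicative.Build (cmonom T) P restr_cm restr_cm_mmorphism.

Definition restr f : P := mmap (mpoly.mpolyC N (R:=K)) restr_cm f.

Lemma restrM f g : restr (f * g) = restr f * restr g.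
Proof. exact: rmorphM. Qed.

Lemma restrX f e : restr (f ^+ e) = restr f ^+ e.
Proof. exact: rmorphXn. Qed.

Lemma mcoeff_restr f m : (finsupp m `<=` V)%fset ->
  mpoly.mcoeff (restr_mnm m) (restr f) = monalg.mcoeff m f.
Proof.
move=> mV; rewrite /restr mmapE raddf_sum /=.
have coef_other m' : m' != m ->
    mpoly.mcoeff (restr_mnm m) (mpoly.mpolyC N (monalg.mcoeff m' f) * restr_cm m') = 0.
  move=> m'm; rewrite mpoly.mcoeffCM /restr_cm.
  case: ifP => m'V; last by rewrite mpoly.mcoeff0 mulr0.
  rewrite mpoly.mcoeffX; case: eqP => [/restr_mnm_inj|]; last by rewrite mulr0.
  by move=> /(_ m'V mV) eqm; rewrite eqm eqxx in m'm.
have [mf|mf] := boolP (m \in msupp f); last first.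
  rewrite monalg.mcoeff_outdom // big_seq big1 // => m' m'f.
  by apply: coef_other; apply: contraNneq mf => <-.
rewrite (bigD1_seq m) ?fset_uniq //= big1 ?addr0 => [|m' /coef_other //].
by rewrite mpoly.mcoeffCM /restr_cm mV mpoly.mcoeffX eqxx mulr1.
Qed.

Lemma restr_eq0P f :
  reflect (forall m, m \in msupp f -> ~~ (finsupp m `<=` V)%fset) (restr f == 0).
Proof.
apply: (iffP eqP) => [f0 m mf|outV].
  apply/negP => mV; move: mf; rewrite -monalg.mcoeff_neq0 -mcoeff_restr // f0.
  by rewrite mpoly.mcoeff0 eqxx.
rewrite /restr mmapE big_seq big1 // => m /outV mV.
by rewrite /restr_cm (negbTE mV) mulr0.
Qed.

Lemma restr_neq0 f m : m \in msupp f -> (finsupp m `<=` V)%fset -> restr f != 0.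
Proof. by move=> mf mV; apply/restr_eq0P => /(_ m mf); rewrite mV. Qed.

End Restriction.

Lemma restr_neq0S (T : choiceType) (K : comNzRingType) (V V' : {fset T})
    (f : {malg K[cmonom T]}) :
  (V `<=` V')%fset -> restr V f != 0 -> restr V' f != 0.
Proof.
move=> VV'; apply: contraNN => /restr_eq0P outV'; apply/restr_eq0P => m mf.
by apply: contraNN (outV' m mf) => /fsubset_trans; apply.
Qed.

Section MonomialIdeal.
Variables (T : choiceType) (K : idomainType) (I : {malg K[cmonom T]} -> Prop).
Hypothesis idealI : is_ideal I.
Implicit Types (m r t : cmonom T) (f : {malg K[cmonom T]}) (V : {fset T}).

Lemma ideal_msupp f : (forall m, m \in msupp f -> I << m >>) -> I f.
Proof.
move=> Imsupp; rewrite (monalgE f); apply: (ideal_sum idealI) => m mf.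
by rewrite malgUZ; apply: (idealMl idealI); apply: Imsupp.
Qed.

Lemma ideal_cm_dvd r m : I << r >> -> (forall v, r v <= m v)%N -> I << m >>.
Proof.
move=> Ir rm; have -> : m = mmul r (divcm m r).
  by apply/eqP/cmP => v; rewrite cmM divcmE subnKC.
by rewrite malgUM mulrC; apply: (idealMl idealI).
Qed.

Lemma not_ideal_msupp f : ~ I f -> exists2 t, t \in msupp f & ~ I << t >>.
Proof.
move=> If; apply: NNPP => noWitness; apply/If/ideal_msupp => m mf.
by apply: NNPP => Im; apply: noWitness; exists m.
Qed.

Definition ideal_avoids V := forall r, I << r >> -> ~~ (finsupp r `<=` V)%fset.

Hypothesis monomialI : forall f m, I f -> m \in msupp f -> I << m >>.

Lemma restr_ideal_eq0 V f : ideal_avoids V -> I f -> restr V f = 0.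
Proof. by move=> avV If; apply/eqP/restr_eq0P => m /(monomialI If)/avV. Qed.

Hypothesis rootI : forall t e, (0 < e)%N -> I << expcm t e >> -> I << t >>.

(* If r lies in I and only uses variables of t, then r divides a power of t. *)
Lemma ideal_avoids_finsupp t : ~ I << t >> -> ideal_avoids (finsupp t).
Proof.
move=> It r Ir; apply/negP => rt; apply: It; apply: (rootI (ltn0Sn (mdeg r))).
apply: (ideal_cm_dvd Ir) => v; rewrite expcmE.
have [vr|vr] := boolP (v \in finsupp r); last by rewrite cm_notin_finsupp.
have tv : (0 < t v)%N by rewrite lt0n cmE_neq0 (fsubsetP rt).
apply: leq_trans (cm_le_mdeg r v) _; apply: leq_trans (leqnSn _) _.
by rewrite leq_pmulr.
Qed.

Lemma radical_monomial_ideal : radical_ideal I.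
Proof.
move=> a e e_gt0 Iae; apply: NNPP => /not_ideal_msupp[t ta It].
have := restr_ideal_eq0 (ideal_avoids_finsupp It) Iae.
by rewrite restrX; apply/eqP; rewrite expf_neq0 // (restr_neq0 ta).
Qed.

End MonomialIdeal.

Lemma sumn_mul_eq (J : eqType) (s : seq J) (F : J -> nat) (x : J) :
  uniq s -> (\sum_(v <- s) F v * (v == x))%N = if x \in s then F x else 0%N.
Proof.
elim: s => [|y s IH] /=; first by rewrite big_nil.
case/andP=> ys us; rewrite big_cons IH // in_cons.
case: (eqVneq y x) => [<-|_] /=; last by rewrite muln0.
by rewrite (negbTE ys) muln1 addn0.
Qed.

Section Shift.
Variables (k : fieldType) (sigma : {rmorphism k -> k}) (n : nat).
Local Notation M := (cmonom (dvar n)).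
Local Notation R := (dpoly k n).
Implicit Types (m s : M) (b : R).

Definition shiftcm m : M :=
  \big[mmul/mone]_(v <- finsupp m) expcm (ucm (v.1, v.2.+1)) (m v).

Lemma shiftcmE m i j : shiftcm m (i, j) = if j is j'.+1 then m (i, j') else 0%N.
Proof.
rewrite /shiftcm cm_big; under eq_bigr => v _ do rewrite expcmE cmU.
case: j => [|j]; first by rewrite big1 // => v _; rewrite xpair_eqE andbF muln0.
under eq_bigr => v _ do rewrite xpair_eqE eqSS -xpair_eqE -surjective_pairing.
by rewrite sumn_mul_eq ?fset_uniq //; case: finsuppP.
Qed.

Lemma shiftcmU (v : dvar n) : shiftcm (ucm v) = ucm (v.1, v.2.+1).
Proof.
apply/eqP/cmP => -[i j]; rewrite shiftcmE cmU; case: v => a b.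
by case: j => [|j]; rewrite ?cmU !xpair_eqE ?andbF ?eqSS.
Qed.

Lemma dsigmaE b :
  dsigma sigma b = \sum_(m <- msupp b) << sigma (monalg.mcoeff m b) *g shiftcm m >>.
Proof.
apply: eq_bigr => m _; rewrite [RHS]malgUZ /shiftcm malgU_big.
by under [in RHS]eq_bigr => v _ do rewrite malgU_expcm.
Qed.

Lemma dsigmaU m : dsigma sigma << m >> = << shiftcm m >>.
Proof.
by rewrite dsigmaE msuppU1 big_seq_fset1 mcoeffUU rmorph1.
Qed.

Lemma msupp_dsigma b m :
  m \in msupp (dsigma sigma b) -> exists2 s, s \in msupp b & m = shiftcm s.
Proof.
by rewrite dsigmaE => /msupp_sum_malgU.
Qed.

Lemma restr_dsigma_witness (V : {fset dvar n}) b :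
  restr V b = 0 -> restr V (dsigma sigma b) != 0 ->
  exists2 y, y \in (malg_vars b `\` V)%fset & (y.1, y.2.+1) \in V.
Proof.
move=> /eqP/restr_eq0P bV /negP sbV; apply: NNPP => noy; apply/sbV/restr_eq0P.
move=> _ /msupp_dsigma[s sb ->]; apply/negP => sV.
have /fsubsetPn[y ys yV] := bV s sb; apply: noy; exists y.
  by rewrite in_fsetD yV (fsubsetP (finsupp_malg_vars sb)).
by apply: (fsubsetP sV); rewrite -cmE_neq0; case: y ys {yV} => i j; rewrite shiftcmE cmE_neq0.
Qed.

End Shift.

Section Exponents.
Variables (k : fieldType) (sigma : {rmorphism k -> k}) (n : nat).
Local Notation M := (cmonom (dvar n)).
Implicit Types (u v : 'I_n -> {poly nat}).

(* y^u: the exponent of sigma^j(y_i) is the j-th coefficient of u_i *)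
Definition ymonom u : M :=
  \big[mmul/mone]_(i < n) \big[mmul/mone]_(j < size (u i))
     expcm (ucm (i, (j : nat))) ((u i)`_j)%R.

Lemma ymonomE u i j : ymonom u (i, j) = (u i)`_j.
Proof.
rewrite /ymonom cm_big (bigD1 i) //= [X in (_ + X)%N]big1 ?addn0 => [|i' i'i].
  2: by rewrite cm_big big1 // => j' _; rewrite expcmE cmU xpair_eqE (negbTE i'i) muln0.
rewrite cm_big; under eq_bigr => j' _ do rewrite expcmE cmU xpair_eqE eqxx.
rewrite -(big_mkord xpredT (fun j' => ((u i)`_j')%R * (j' == j))%N).
rewrite sumn_mul_eq ?iota_uniq // mem_index_iota /=.
by case: ltnP => // size_le; rewrite nth_default.
Qed.

Lemma ymonomMn u e : ymonom (fun i => u i *+ e) = expcm (ymonom u) e.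
Proof. by apply/eqP/cmP => -[i j]; rewrite expcmE !ymonomE coefMn -mulr_natl natn. Qed.

Lemma ymonomD u v : ymonom (fun i => u i + v i) = mmul (ymonom u) (ymonom v).
Proof. by apply/eqP/cmP => -[i j]; rewrite cmM !ymonomE coefD. Qed.

Lemma ymonomXM v : ymonom (fun i => 'X * v i) = shiftcm (ymonom v).
Proof.
by apply/eqP/cmP => -[i j]; rewrite shiftcmE ymonomE coefXM; case: j => [|j] //=; rewrite ymonomE.
Qed.

Lemma ymonom_surj (m : M) : exists u, ymonom u = m.
Proof.
pose d := (\max_(v <- finsupp m) v.2.+1)%N.
exists (fun i => \poly_(j < d) m (i, j)); apply/eqP/cmP => -[i j].
rewrite ymonomE coef_poly; case: ltnP => // dj; apply/esym/eqP; rewrite cmE_eq0.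
apply: contraTN dj => ijm; rewrite -ltnNge.
exact: (@leq_bigmax_seq _ (enum_fset (finsupp m)) xpredT (fun v : dvar n => v.2.+1) _ ijm).
Qed.

Lemma ymonE u : ymon sigma u = << ymonom u >>.
Proof.
have iterE i j : iter j (@dsigma k sigma n) (dX k (i, 0%N)) = << ucm (i, j) >>.
  elim: j => [|j IH]; first reflexivity.
  rewrite iterS IH dsigmaU shiftcmU; reflexivity.
rewrite /ymon /ymonom (malgU_big k); apply: eq_bigr => i _.
rewrite /dpow (malgU_big k); apply: eq_bigr => j _.
rewrite (malgU_expcm k) iterE; reflexivity.
Qed.

Lemma monomial_ideal_msupp (I : dpoly k n -> Prop) :
  is_ideal I -> monomial_ideal sigma I ->
  forall f m, I f -> m \in msupp f -> I << m >>.
Proof.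
move=> idealI [U defI] f m /defI[s [sU ->]] {f}.
elim: s sU => [|[c g] s IH] sU; first by rewrite big_nil msupp0.
rewrite big_cons => /(fsubsetP (msuppD_le _ _)); rewrite in_fsetU => /orP[|]; last first.
  by apply: IH => p ps; apply: sU; rewrite inE ps orbT.
have [u Uu /= ->] := sU _ (mem_head _ _).
rewrite ymonE => /msuppM_le[m1 [m2 [_]]]; rewrite msuppU1 in_fset1 => /eqP -> ->.
rewrite (malgUM k); apply: (idealMl idealI); rewrite -ymonE; apply/defI.
exists [:: (1, ymon sigma u)]; split=> [p|].
  by rewrite inE => /eqP ->; exists u.
rewrite big_seq1 mul1r; reflexivity.
Qed.

End Exponents.

Section WellMixed.
Variables (k : fieldType) (sigma : {rmorphism k -> k}) (n : nat) (I : dpoly k n -> Prop).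
Local Notation M := (cmonom (dvar n)).
Local Notation R := (dpoly k n).
Hypothesis idealI : is_ideal I.
Hypothesis monomialI : forall f m, I f -> m \in msupp f -> I << m >>.
Hypothesis rootI : forall (t : M) e, (0 < e)%N -> I << expcm t e >> -> I << t >>.
Hypothesis shiftI :
  forall m1 m2 : M, I << mmul m1 m2 >> -> I << mmul m1 (shiftcm m2) >>.
Local Notation avoids := (ideal_avoids I).

Lemma ideal_avoids_fsetU1 (V : {fset dvar n}) (y : dvar n) :
  avoids V -> (y.1, y.2.+1) \in V -> avoids (y |` V)%fset.
Proof.
move=> avV yV r Ir; apply/negP => rV.
pose r' := divcm r (expcm (ucm y) (r y)).
have r'E v : r' v = if v == y then 0%N else r v.
  rewrite divcmE expcmE cmU eq_sym.
  by case: (eqVneq v y) => [->|_]; rewrite ?muln1 ?subnn ?muln0 ?subn0.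
(* r divides a power of r' y, so r' y is in I by (a), and then r' sigma(y) by (b) *)
have Ir'y : I << mmul r' (ucm y) >>.
  apply: (rootI (ltn0Sn (mdeg r))); apply: (ideal_cm_dvd idealI Ir) => v.
  rewrite expcmE cmM r'E cmU eq_sym; case: (eqVneq v y) => [->|_] /=.
    by rewrite add0n muln1 leqW ?cm_le_mdeg.
  by rewrite addn0 leq_pmull.
have := shiftI Ir'y; rewrite shiftcmU => Ishift.
move/negP: (avV _ Ishift); apply; apply/fsubsetP => v.
rewrite mdomD in_fsetU mdomU in_fset1 => /orP[|/eqP -> //].
rewrite -cmE_neq0 r'E; case: (eqVneq v y) => // vy; rewrite cmE_neq0 => vr.
by move: (fsubsetP rV v vr); rewrite in_fsetU in_fset1 (negbTE vy).
Qed.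

Definition wm_witness (a b : R) (V : {fset dvar n}) :=
  [/\ avoids V, restr V a != 0 & restr V (dsigma sigma b) != 0].

Lemma wm_witness_fsetU1 a b V : I (a * b) -> wm_witness a b V ->
  exists2 y, y \in (malg_vars b `\` V)%fset & wm_witness a b (y |` V)%fset.
Proof.
move=> Iab [avV aV sbV].
have bV : restr V b = 0.
  move: (restr_ideal_eq0 monomialI avV Iab); rewrite restrM => /eqP.
  by rewrite mulf_eq0 (negbTE aV) => /eqP.
have [y yW yV] := restr_dsigma_witness bV sbV.
exists y => //; split; first exact: ideal_avoids_fsetU1.
  exact: restr_neq0S (fsubsetU1 _ _) aV.
exact: restr_neq0S (fsubsetU1 _ _) sbV.
Qed.

Lemma well_mixed_monomial_ideal : well_mixed sigma I.
Proof.
move=> a b Iab; apply: NNPP => /(not_ideal_msupp idealI)[t ta It].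
suff no_witness c V :
    (#|` (malg_vars b `\` V)%fset| <= c)%N -> wm_witness a b V -> False.
  apply: (no_witness _ (finsupp t) (leqnn _)).
  have := restr_neq0 ta (fsubset_refl _); rewrite restrM mulf_eq0 negb_or.
  case/andP=> aV sbV; split; [exact: ideal_avoids_finsupp | exact: aV | exact: sbV].
elim: c V => [|c IH] V card_le /(wm_witness_fsetU1 Iab)[y yWV wy].
  by move: card_le; rewrite (cardfsD1 y) yWV.
apply: (IH _ _ wy); move: card_le.
have -> : (malg_vars b `\` (y |` V) = (malg_vars b `\` V) `\ y)%fset.
  by rewrite fsetDDl fsetUC.
by rewrite (cardfsD1 y (malg_vars b `\` V)%fset) yWV.
Qed.

End WellMixed.

Theorem corollary5p10 (k : fieldType) (sigma : {rmorphism k -> k}) (n : nat)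
  (I : dpoly k n -> Prop) :
  [pchar k] =i pred0 ->
  sigma_ideal sigma I ->
  monomial_ideal sigma I ->
  let S := fun u : 'I_n -> {poly nat} => I (ymon sigma u) in
  (radical_ideal I /\ well_mixed sigma I) <->
  ((forall (m : nat) (u : 'I_n -> {poly nat}),
      (0 < m)%N -> S (fun i => u i *+ m) -> S u) /\
   (forall u v : 'I_n -> {poly nat},
      S (fun i => u i + v i) -> S (fun i => u i + 'X * v i))).
Proof.
move=> _ [idealI _] monI S; split.
  case=> radI wmI; split=> [e u e_gt0|u v].
    by rewrite /S !ymonE ymonomMn (malgU_expcm k); apply: radI.
  rewrite /S !ymonE !ymonomD ymonomXM !(malgUM k) -(dsigmaU sigma); exact: wmI.
case=> rootS shiftS.
have monomialI := monomial_ideal_msupp idealI monI.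
have rootI (t : cmonom (dvar n)) e : (0 < e)%N -> I << expcm t e >> -> I << t >>.
  have [u <-] := ymonom_surj t; rewrite -ymonomMn -!(ymonE sigma); exact: rootS.
have shiftI (m1 m2 : cmonom (dvar n)) :
    I << mmul m1 m2 >> -> I << mmul m1 (shiftcm m2) >>.
  have [u <-] := ymonom_surj m1; have [v <-] := ymonom_surj m2.
  rewrite -ymonomXM -!ymonomD -!(ymonE sigma); exact: shiftS.
split; first exact: radical_monomial_ideal monomialI rootI.
exact: well_mixed_monomial_ideal monomialI rootI shiftI.
Qed.
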